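(* Let $\mathcal H_A,\mathcal H_B$ be finite-dimensional complex Hilbert spaces and let $\rho$ be a separable density matrix on $\mathcal H_A\otimes\mathcal H_B$ with full rank, $\mathcal R(\rho)=\dim(\mathcal H_A\otimes\mathcal H_B)$. If $\rho$ lies on the boundary of the set of PPT states, then $\mathcal R(\rho)>\mathcal R(\rho^{T_B})$.
   Context: $\rho^{T_B}=(\mathbf 1_A\otimes T)\rho$ is the partial transpose, with $T$ transposition in a chosen basis of $\mathcal H_B$. The set of PPT states is $\{\rho\ \text{density matrix}:\rho^{T_B}\ge 0\}$, a closed convex subset of the set of density matrices; its boundary is taken relative to the set of density matrices (so boundary points are arbitrarily close to density matrices whose partial transpose has a negative eigenvalue). $\mathcal R(\cdot)$ denotes the rank. $\rho$ is separable if it is a convex combination of pure product states $|\psi\rangle\langle\psi|\otimes|\phi\rangle\langle\phi|$. *)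

(* complex numbers are R[i] (mathcomp-real-closed's complex)
   over R : realType (the real numbers); tensor product of matrices is
   mxtens's tensmx (notation A *t B), with the index of (a,b) in
   'I_(dA*dB) given by mxtens_index (a,b) = a*dB + b. *)
From HB Require Import structures.
From mathcomp Require Import all_boot all_order all_algebra.
From mathcomp Require Export complex mxtens.
From mathcomp Require Export reals.
Set Implicit Arguments.
Unset Strict Implicit.
Unset Printing Implicit Defensive.
Import Order.TTheory GRing.Theory Num.Theory.
Local Open Scope ring_scope.

Section QInfo.
Variable C : numClosedFieldType.

Definition hconj m n (A : 'M[C]_(m, n)) : 'M[C]_(n, m) := (map_mx Num.conj A)^T.

Definition hermitian n (A : 'M[C]_n) : Prop := hconj A = A.

Definition psd n (A : 'M[C]_n) : Prop :=
  hermitian A /\ forall v : 'cV[C]_n, 0 <= (hconj v *m A *m v) 0 0.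

Definition density_matrix n (A : 'M[C]_n) : Prop := psd A /\ \tr A = 1.

Definition ptransB dA dB (rho : 'M[C]_(dA * dB)) : 'M[C]_(dA * dB) :=
  \matrix_(i, j)
    rho (mxtens_index ((mxtens_unindex i).1, (mxtens_unindex j).2))
        (mxtens_index ((mxtens_unindex j).1, (mxtens_unindex i).2)).

Definition proj n (v : 'cV[C]_n) : 'M[C]_n := v *m hconj v.

Definition unit_vector n (v : 'cV[C]_n) : Prop := hconj v *m v = 1%:M.

Definition separable dA dB (rho : 'M[C]_(dA * dB)) : Prop :=
  exists (N : nat) (p : 'I_N -> C) (psi : 'I_N -> 'cV[C]_dA)
         (phi : 'I_N -> 'cV[C]_dB),
    [/\ forall k, 0 <= p k,
        \sum_(k < N) p k = 1,
        forall k, unit_vector (psi k),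
        forall k, unit_vector (phi k) &
        rho = \sum_(k < N) p k *: (proj (psi k) *t proj (phi k))].

Definition ppt dA dB (rho : 'M[C]_(dA * dB)) : Prop :=
  density_matrix rho /\ psd (ptransB rho).

Definition ppt_boundary dA dB (rho : 'M[C]_(dA * dB)) : Prop :=
  ppt rho /\
  forall eps : C, 0 < eps ->
    exists sigma : 'M[C]_(dA * dB),
      [/\ density_matrix sigma, ~ psd (ptransB sigma) &
          forall i j, `|rho i j - sigma i j| < eps].

End QInfo.

From Pilot Require Import Defs.
From HB Require Import structures.
From mathcomp Require Import all_boot all_order all_algebra.
From mathcomp Require Import complex mxtens reals.
From mathcomp Require Import ring.
Import Order.TTheory GRing.Theory Num.Theory.
Local Open Scope ring_scope.

Set Implicit Arguments.
Unset Strict Implicit.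
Unset Printing Implicit Defensive.

(* If rho^{T_B} also had full rank it would be positive definite, and positive
   definiteness is an open condition among Hermitian matrices: an invertible
   psd M is coercive, |v|^2 <= K <v, M v>, while an entrywise eps-perturbation
   moves <v, M v> by at most eps n |v|^2.  Since partial transposition is
   continuous entrywise and preserves hermiticity, all density matrices close
   to rho would then be PPT, so rho would be interior to the PPT set. *)

Section PositiveDefinite.
Variable C : numClosedFieldType.

Lemma hconjD m n (A B : 'M[C]_(m, n)) : hconj (A + B) = hconj A + hconj B.
Proof. by apply/matrixP => i j; rewrite !mxE rmorphD. Qed.

Lemma hconjZ m n a (A : 'M[C]_(m, n)) : hconj (a *: A) = a^* *: hconj A.
Proof. by apply/matrixP => i j; rewrite !mxE rmorphM. Qed.

Lemma hconjK m n (A : 'M[C]_(m, n)) : hconj (hconj A) = A.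
Proof. by apply/matrixP => i j; rewrite !mxE conjCK. Qed.

Lemma hconjM m n p (A : 'M[C]_(m, n)) (B : 'M[C]_(n, p)) :
  hconj (A *m B) = hconj B *m hconj A.
Proof. by rewrite /hconj map_mxM trmx_mul. Qed.

Lemma hconj_delta n (i : 'I_n) :
  hconj (delta_mx i 0 : 'cV[C]_n) = delta_mx 0 i.
Proof.
by apply/matrixP => p q; rewrite !mxE; case: eqP; case: eqP;
  rewrite /= ?rmorph1 ?rmorph0.
Qed.

Definition hform n (M : 'M[C]_n) (u v : 'cV[C]_n) : C :=
  (hconj u *m M *m v) 0 0.

Definition sqnorm n (v : 'cV[C]_n) : C := \sum_i `|v i 0| ^+ 2.

Lemma hformB n (M N : 'M[C]_n) u v :
  hform (M - N) u v = hform M u v - hform N u v.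
Proof. by rewrite /hform mulmxBr mulmxBl !mxE. Qed.

Lemma hformDZ n (M : 'M[C]_n) a b c d u v x y :
  hform M (a *: u + b *: v) (c *: x + d *: y) =
  a^* * c * hform M u x + a^* * d * hform M u y +
  b^* * c * hform M v x + b^* * d * hform M v y.
Proof.
rewrite /hform hconjD !hconjZ !mulmxDl !mulmxDr -!scalemxAl -!scalemxAr !mxE.
ring.
Qed.

Lemma hform_conj n (M : 'M[C]_n) u v :
  Defs.hermitian M -> (hform M u v)^* = hform M v u.
Proof.
move=> HM; rewrite /hform.
have -> : ((hconj u *m M *m v) 0 0)^* = hconj (hconj u *m M *m v) 0 0.
  by rewrite !mxE.
by rewrite !hconjM hconjK HM mulmxA.
Qed.

Lemma hform_real n (M : 'M[C]_n) v :
  Defs.hermitian M -> hform M v v \is Num.real.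
Proof. by move=> HM; rewrite CrealE hform_conj. Qed.

(* The [+ 1] keeps the coefficient of [v] in the test vector positive, which
   avoids a case split on [hform M u u = 0]. *)
Lemma psd_cauchy_schwarz n (M : 'M[C]_n) u v : psd M ->
  hform M u v * (hform M u v)^* <= (hform M u u + 1) * hform M v v.
Proof.
move=> [HM Mge0]; set x := hform M u v; set a := hform M u u + 1.
have a_gt0 : 0 < a by rewrite ltr_pwDr // Mge0.
have a_conj : a^* = a by rewrite conj_Creal // gtr0_real.
have := Mge0 (a *: v + (- x) *: u).
rewrite -/(hform _ _ _) hformDZ a_conj -(hform_conj u v HM) -/x rmorphN.
have -> : a * a * hform M v v + a * - x * x^* + - x^* * a * x
          + - x^* * - x * hform M u u
          = a * (a * hform M v v - x * x^*) - x * x^* by rewrite /a; ring.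
rewrite subr_ge0 => /(le_trans (mul_conjC_ge0 x)).
by rewrite pmulr_rge0 // subr_ge0.
Qed.

Lemma hform_invmx_delta n (M : 'M[C]_n) v i :
  Defs.hermitian M -> M \in unitmx ->
  hform M (invmx M *m delta_mx i 0) v = v i 0.
Proof.
move=> HM Mu; rewrite /hform -{2}HM -hconjM mulmxA mulmxV // mul1mx.
by rewrite hconj_delta -rowE mxE.
Qed.

(* Cauchy-Schwarz bounds each coordinate [v i = hform M (M^-1 e_i) v]. *)
Lemma psd_unitmx_coercive n (M : 'M[C]_n) : psd M -> M \in unitmx ->
  exists2 K, 0 <= K & forall v, sqnorm v <= K * hform M v v.
Proof.
move=> Mpsd Mu; have [HM Mge0] := Mpsd.
pose w (i : 'I_n) : 'cV_n := invmx M *m delta_mx i 0.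
exists (\sum_i (hform M (w i) (w i) + 1)).
  by apply: sumr_ge0 => i _; apply: addr_ge0; [exact: Mge0|].
move=> v; rewrite mulr_suml; apply: ler_sum => i _.
by rewrite normCK -(hform_invmx_delta v i HM Mu) psd_cauchy_schwarz.
Qed.

Lemma hform_entry_bound n (E : 'M[C]_n) v (eps : C) : 0 <= eps ->
  (forall i j, `|E i j| <= eps) -> `|hform E v v| <= eps * (n%:R * sqnorm v).
Proof.
move=> eps_ge0 Ele.
have -> : hform E v v = \sum_k \sum_j ((v j 0)^* * E j k * v k 0).
  rewrite /hform mxE; apply: eq_bigr => k _.
  by rewrite mxE mulr_suml; apply: eq_bigr => j _; rewrite !mxE.
apply: le_trans (ler_norm_sum _ _ _) _.
apply: (@le_trans _ _ (\sum_k \sum_j eps * (`|v j 0| * `|v k 0|))).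
  apply: ler_sum => k _; apply: le_trans (ler_norm_sum _ _ _) _.
  apply: ler_sum => j _; rewrite !normrM norm_conjC mulrAC [eps * _]mulrC.
  by rewrite ler_wpM2l ?mulr_ge0.
under eq_bigr do rewrite -mulr_sumr.
rewrite -mulr_sumr ler_wpM2l // -(ler_pMn2r (_ : (0 < 2)%N)) //.
rewrite -sumrMnl; under eq_bigr do rewrite -sumrMnl.
apply: (@le_trans _ _ (\sum_k \sum_j (`|v j 0| ^+ 2 + `|v k 0| ^+ 2))).
  apply: ler_sum => k _; apply: ler_sum => j _.
  exact: (real_leif_mean_square_scaled (normr_real _) (normr_real _)).1.
under eq_bigr do rewrite big_split /= big_const_ord iter_addr_0.
by rewrite big_split /= sumr_const card_ord sumrMnl mulr_natl mulr2n.
Qed.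

Lemma psd_unitmx_stable n (M : 'M[C]_n) : psd M -> M \in unitmx ->
  exists2 eps : C, 0 < eps & forall N : 'M[C]_n, Defs.hermitian N ->
    (forall i j, `|N i j - M i j| < eps) -> psd N.
Proof.
move=> Mpsd Mu; have [HM Mge0] := Mpsd.
have [K K_ge0 coerc] := psd_unitmx_coercive Mpsd Mu.
set c := n%:R * K + 1; have c_gt0 : 0 < c by rewrite ltr_wpDl ?mulr_ge0.
exists c^-1 => [|N HN NM_close]; first by rewrite invr_gt0.
split=> // v; rewrite -/(hform N v v).
have a_ge0 : 0 <= hform M v v := Mge0 v.
have d_le : `|hform (N - M) v v| <= hform M v v.
  apply: le_trans (hform_entry_bound (eps := c^-1) v _ _) _.
  - by rewrite invr_ge0 ltW.
  - by move=> i j; rewrite !mxE ltW.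
  apply: (@le_trans _ _ (n%:R * K / c * hform M v v)).
    rewrite [leRHS](_ : _ = c^-1 * (n%:R * (K * hform M v v))).
      by rewrite !ler_wpM2l // invr_ge0 ltW.
    by rewrite mulrAC [in LHS]mulrC mulrA.
  by rewrite -[leRHS]mul1r ler_wpM2r // ler_pdivrMr // mul1r lerDl.
have d_real : hform (N - M) v v \is Num.real.
  by rewrite hformB rpredB ?hform_real.
have -> : hform N v v = hform M v v + hform (N - M) v v.
  by rewrite hformB addrC subrK.
by rewrite addrC -[hform M v v]opprK subr_ge0; apply: real_lerNnormlW.
Qed.

Lemma ptransB_hermitian dA dB (rho : 'M[C]_(dA * dB)) :
  Defs.hermitian rho -> Defs.hermitian (ptransB rho).
Proof. by move=> Hrho; apply/matrixP => i j; rewrite !mxE -{2}Hrho !mxE. Qed.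

End PositiveDefinite.

Theorem lemma2 (R : realType) (dA dB : nat) (rho : 'M[R[i]]_(dA * dB)) :
  density_matrix rho ->
  separable rho ->
  \rank rho = (dA * dB)%N ->
  ppt_boundary rho ->
  (\rank (ptransB rho) < \rank rho)%N.
Proof.
move=> _ _ rho_full [[_ rhoT_psd] near_nonppt].
rewrite rho_full ltn_neqAle rank_leq_row andbT; apply/negP => /eqP rhoT_full.
have rhoT_unit : ptransB rho \in unitmx.
  by rewrite -row_free_unit /row_free rhoT_full.
have [eps eps_gt0 psd_near] := psd_unitmx_stable rhoT_psd rhoT_unit.
have [sigma [[[sigma_herm _] _] sigmaT_nonpsd sigma_close]] :=
  near_nonppt eps eps_gt0.
apply: sigmaT_nonpsd; apply: psd_near; first exact: ptransB_hermitian.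
by move=> i j; rewrite !mxE distrC.
Qed.
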